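(* Let $(X,\preceq,\{H_n\})$ be a half-space order and let a group $G$ act on $X$ by quasi-automorphisms. Let $T_X:G\to\mathbb{R}$, $T_X(g)=\lim_{n\to\infty}\frac{h(g^na,a)}{n}$ (any $a\in X$), be the associated translation number, and let $\leq$ be the relation on $G$ induced by the action. Then $T_X$ sandwiches $\leq$, i.e. there is $C>0$ such that $\{g\in G: T_X(g)\geq C\}\subset G^+:=\{g\in G: g\geq e\}$.
   Context: A half-space filtration of $X$ is $\{H_n\}_{n\in\mathbb{Z}}$ with $H_{n+1}\subsetneq H_n$, $\bigcap H_n=\emptyset$, $\bigcup H_n=X$; height $h(a)=\sup\{n: a\in H_n\}$, $h(a,b)=h(a)-h(b)$. A half-space order $(X,\preceq,\{H_n\})$: $(X,\preceq)$ a poset, $\{H_n\}$ a half-space filtration, and for a constant $w$, $h(a,b)\geq w\Rightarrow a\succeq b$. The $G$-action (by bijections, not necessarily order-preserving) is by quasi-automorphisms if for some $d$, $|h(ga,gb)-h(a,b)|\leq d$ for all $g,a,b$; the limit defining $T_X$ then exists and is independent of $a$. The induced relation on $G$ is $g\leq h\Leftrightarrow\forall k\in G\,\forall x\in X:\ (kg).x\preceq(kh).x$. *)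

From Stdlib Require Import Reals ZArith ClassicalEpsilon.
From Coquelicot Require Import Coquelicot.
Open Scope R_scope.

Definition half_space_filtration {X : Type} (H : Z -> X -> Prop) : Prop :=
  (forall n a, H (n + 1)%Z a -> H n a) /\
  (forall n, exists a, H n a /\ ~ H (n + 1)%Z a) /\
  (forall a, ~ (forall n, H n a)) /\
  (forall a, exists n, H n a).

(* height h(a) = sup {n : a in H_n}; for integers the sup is the maximum. *)
Definition height {X : Type} (H : Z -> X -> Prop) (a : X) : Z :=
  epsilon (inhabits 0%Z) (fun n => H n a /\ forall m, H m a -> (m <= n)%Z).

Definition rel_height {X : Type} (H : Z -> X -> Prop) (a b : X) : Z :=
  (height H a - height H b)%Z.

Definition is_poset {X : Type} (le : X -> X -> Prop) : Prop :=
  (forall a, le a a) /\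
  (forall a b, le a b -> le b a -> a = b) /\
  (forall a b c, le a b -> le b c -> le a c).

Definition half_space_order {X : Type} (le : X -> X -> Prop) (H : Z -> X -> Prop) : Prop :=
  is_poset le /\ half_space_filtration H /\
  exists w : Z, forall a b, (rel_height H a b >= w)%Z -> le b a.

Definition is_group {G : Type} (mul : G -> G -> G) (e : G) (inv : G -> G) : Prop :=
  (forall x y z, mul x (mul y z) = mul (mul x y) z) /\
  (forall x, mul e x = x) /\
  (forall x, mul (inv x) x = e).

Definition is_action {G X : Type} (mul : G -> G -> G) (e : G) (act : G -> X -> X) : Prop :=
  (forall x, act e x = x) /\
  (forall g k x, act (mul g k) x = act g (act k x)).

Definition quasi_automorphic {G X : Type} (H : Z -> X -> Prop) (act : G -> X -> X) : Prop :=
  exists d : Z, forall g a b,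
    (Z.abs (rel_height H (act g a) (act g b) - rel_height H a b) <= d)%Z.

Fixpoint gpow {G : Type} (mul : G -> G -> G) (e : G) (g : G) (n : nat) : G :=
  match n with
  | O => e
  | S n => mul g (gpow mul e g n)
  end.

Definition translation_number {G X : Type} (mul : G -> G -> G) (e : G)
  (act : G -> X -> X) (H : Z -> X -> Prop) (g : G) (a : X) : R :=
  real (Lim_seq (fun n => IZR (rel_height H (act (gpow mul e g n) a) a) / INR n)).

Definition induced_le {G X : Type} (mul : G -> G -> G) (act : G -> X -> X)
  (le : X -> X -> Prop) (g k : G) : Prop :=
  forall l x, le (act (mul l g) x) (act (mul l k) x).

(* An element g of large translation number displaces every point by a large
   height: the heights h(g^n a, a) grow at most like n (h(g a, a) + d), so
   T_X(g) <= h(g a, a) + d, and quasi-invariance moves this bound from a to any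
   point x, and then through any l, at a cost of d each time.  Once
   h((l g) x, l x) reaches the constant w of the half-space order,
   l x <= (l g) x, i.e. e <= g. *)
From Stdlib Require Import Reals ZArith Lia Lra.
From Coquelicot Require Import Coquelicot.
Open Scope R_scope.

Lemma rel_height_trans {X : Type} (H : Z -> X -> Prop) (a b c : X) :
  (rel_height H a b + rel_height H b c)%Z = rel_height H a c.
Proof. unfold rel_height; lia. Qed.

Section QuasiAutomorphicAction.

Variables (X G : Type) (H : Z -> X -> Prop).
Variables (mul : G -> G -> G) (e : G) (act : G -> X -> X) (d : Z).
Hypothesis act_e : forall x, act e x = x.
Hypothesis act_mul : forall g k x, act (mul g k) x = act g (act k x).
Hypothesis quasi_aut : forall g a b,
  (Z.abs (rel_height H (act g a) (act g b) - rel_height H a b) <= d)%Z.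

Lemma rel_height_act_ge (g : G) (a b : X) :
  (rel_height H a b - d <= rel_height H (act g a) (act g b))%Z.
Proof. pose proof (quasi_aut g a b); lia. Qed.

Lemma displacement_ge (g : G) (a x : X) :
  (rel_height H (act g a) a - d <= rel_height H (act g x) x)%Z.
Proof.
  pose proof (rel_height_act_ge g x a).
  unfold rel_height in *; lia.
Qed.

Lemma rel_height_gpow_le (g : G) (a : X) (n : nat) :
  (rel_height H (act (gpow mul e g n) a) a
     <= Z.of_nat n * (rel_height H (act g a) a + d))%Z.
Proof.
  induction n as [|n IH]; cbn [gpow].
  - rewrite act_e; unfold rel_height; lia.
  - rewrite act_mul, Nat2Z.inj_succ, Z.mul_succ_l.
    pose proof (quasi_aut g (act (gpow mul e g n) a) a).
    rewrite <- (rel_height_trans H _ (act g a) a).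
    lia.
Qed.

(* [real] sends both infinite limits to 0, whence the positivity hypothesis. *)
Lemma translation_number_le (g : G) (a : X) :
  0 < translation_number mul e act H g a ->
  translation_number mul e act H g a <= IZR (rel_height H (act g a) a + d).
Proof.
  unfold translation_number.
  set (u := fun n => IZR (rel_height H (act (gpow mul e g n) a) a) / INR n).
  set (M := IZR (rel_height H (act g a) a + d)).
  assert (Hlim : Rbar_le (Lim_seq u) (Lim_seq (fun _ => M))).
  { apply Lim_seq_le_loc; exists 1%nat; intros n Hn; unfold u.
    apply Rle_div_l; [apply lt_0_INR; lia|].
    rewrite INR_IZR_INZ; unfold M; rewrite <- mult_IZR; apply IZR_le.
    pose proof (rel_height_gpow_le g a n); lia. }
  rewrite Lim_seq_const in Hlim.
  destruct (Lim_seq u); simpl in *; lra || contradiction.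
Qed.

End QuasiAutomorphicAction.

Theorem proposition2p6 (X G : Type) (le : X -> X -> Prop) (H : Z -> X -> Prop)
  (mul : G -> G -> G) (e : G) (inv : G -> G) (act : G -> X -> X) :
  half_space_order le H ->
  is_group mul e inv ->
  is_action mul e act ->
  quasi_automorphic H act ->
  exists C : R, C > 0 /\
    forall g : G,
      (exists a : X, translation_number mul e act H g a >= C) ->
      induced_le mul act le e g.
Proof.
  intros [_ [_ [w Hw]]] _ [act_e act_mul] [d quasi_aut].
  exists (IZR (Z.abs w + 3 * Z.abs d + 1)); split; [apply IZR_lt; lia|].
  intros g [a HT] l x.
  assert (Hpos : 0 < IZR (Z.abs w + 3 * Z.abs d + 1)) by (apply IZR_lt; lia).
  assert (Ha : (Z.abs w + 3 * Z.abs d + 1 <= rel_height H (act g a) a + d)%Z).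
  { apply le_IZR.
    pose proof (translation_number_le X G H mul e act d act_e act_mul quasi_aut g a).
    lra. }
  pose proof (displacement_ge X G H act d quasi_aut g a x) as Hx.
  pose proof (rel_height_act_ge X G H act d quasi_aut l (act g x) x) as Hlx.
  apply Hw; rewrite !act_mul, act_e; lia.
Qed.
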